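(* Fix $q\in(1/2,1)$, integers $K\ge1$, $1\le C\le K/2$, and $\lambda\in[0,1]$. Let $\sigma$ be a state-symmetric strategy with $\sigma(1,k)(C)=1$ for every $k\ge K/2$. Then $\phi_\sigma$ has no fixed point $x\in[0,1]$ satisfying both $\lambda x+(1-\lambda)q>1/2$ and $x\le q$.
   Context: A strategy is a map $\sigma:\{-1,1\}\times\{0,\dots,K\}\to\Delta(\{0,\dots,C\})$, where $\sigma(s,k)$ is the distribution of the number of positive stories (out of $C$ shared) shared by an agent with own story $s$ who sees $k$ positive stories among $K$ in their news feed; feasibility requires $\sigma(s,k)$ to be supported in $[\max(0,C+k-K),\min(k,C)]$. $\mathbb{E}[\sigma(s,k)]$ denotes the mean of $\sigma(s,k)$. $\sigma$ is state symmetric if $\sigma(s,k)(z)=\sigma(-s,K-k)(C-z)$ for all $s,k,z$. The inflow accuracy function of $\sigma$ is $\phi_\sigma(x)=\frac{q+\sum_{k=0}^K P_k(x,\lambda)[q\,\mathbb{E}[\sigma(1,k)]+(1-q)\mathbb{E}[\sigma(-1,k)]]}{1+C}$ with $P_k(x,\lambda)=\mathbb{P}[\mathrm{Binom}(K,\lambda x+(1-\lambda)q)=k]$. *)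

From HB Require Import structures.
From mathcomp Require Import all_boot all_order all_algebra.
From mathcomp Require Import reals.
Set Implicit Arguments. Unset Strict Implicit. Unset Printing Implicit Defensive.
Import Order.TTheory GRing.Theory Num.Theory.
Local Open Scope ring_scope.

(* A (mixed) strategy: sigma s k z is the probability that an agent with own
   story s (true = +1, false = -1) who sees k positive stories among K in the
   feed shares exactly z positive stories (out of C).  Only the values with
   k <= K and z <= C are meaningful. *)
Definition strategy (R : realType) := bool -> nat -> nat -> R.

Definition is_strategy (R : realType) (K C : nat) (sigma : strategy R) : Prop :=
  forall (s : bool) (k : nat), (k <= K)%N ->
    [/\ (forall z, (z <= C)%N -> 0 <= sigma s k z),
        \sum_(z < C.+1) sigma s k z = 1
      & (forall z, (z <= C)%N ->
           ~~ ((C + k - K <= z)%N && (z <= minn k C)%N) -> sigma s k z = 0)].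

Definition state_symmetric (R : realType) (K C : nat) (sigma : strategy R) : Prop :=
  forall (s : bool) (k z : nat), (k <= K)%N -> (z <= C)%N ->
    sigma s k z = sigma (~~ s) (K - k)%N (C - z)%N.

Definition mean_share (R : realType) (C : nat) (sigma : strategy R) (s : bool) (k : nat) : R :=
  \sum_(z < C.+1) (z%:R * sigma s k z).

Definition binom_pmf (R : realType) (K : nat) (p : R) (k : nat) : R :=
  ('C(K, k))%:R * p ^+ k * (1 - p) ^+ (K - k).

Definition Pk (R : realType) (K : nat) (q lambda x : R) (k : nat) : R :=
  binom_pmf K (lambda * x + (1 - lambda) * q) k.

Definition inflow_accuracy (R : realType) (K C : nat) (q lambda : R)
    (sigma : strategy R) (x : R) : R :=
  (q + \sum_(k < K.+1) Pk K q lambda x k *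
         (q * mean_share C sigma true k + (1 - q) * mean_share C sigma false k))
  / (1 + C%:R).

From HB Require Import structures.
From mathcomp Require Import all_boot all_order all_algebra.
From mathcomp Require Import reals.
From mathcomp Require Import ring lra zify.
Set Implicit Arguments.
Unset Strict Implicit.
Unset Printing Implicit Defensive.
Import Order.TTheory GRing.Theory Num.Theory.
Local Open Scope ring_scope.

(* Write m(s, k) for the mean number of positive stories shared and
   w k := C - m(1, k) for the shortfall of a positive agent.  State symmetry
   gives m(-1, k) = w (K - k), and with P k := P[Binom(K, p) = k],
   p := lambda x + (1 - lambda) q,
     (1 + C) phi(x) = q + q C - (q - p) sum_k (w k + w (K - k)) P k
                        + sum_k w k ((1 - p) P (K - k) - p P k).
   At most one of w k, w (K - k) is nonzero, so the first sum is at most C;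
   the second sum only sees k < K/2, where p > 1/2 makes every bracket
   nonnegative, and its k = 0 term C ((1 - p) p^K - p (1 - p)^K) is positive.
   Hence (1 + C) phi(x) > q + p C >= (1 + C) x whenever x <= p <= q. *)

Lemma sum_ord_reflect (V : zmodType) (n : nat) (F : nat -> V) :
  \sum_(k < n.+1) F (n - k)%N = \sum_(k < n.+1) F k.
Proof.
rewrite (reindex_inj rev_ord_inj) /=; apply: eq_bigr => i _.
by rewrite subSS subKn // -ltnS.
Qed.

Definition binom_reflect_gap (R : realType) (K : nat) (p : R) (k : nat) : R :=
  (1 - p) * binom_pmf K p (K - k) - p * binom_pmf K p k.

Section Binomial.

Variables (R : realType) (K : nat) (p : R).

Lemma binom_pmf_sum : \sum_(k < K.+1) binom_pmf K p k = 1.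
Proof.
have := exprDn (1 - p) p K; rewrite subrK expr1n => ->.
by apply: eq_bigr => i _; rewrite /binom_pmf -mulr_natl; ring.
Qed.

Lemma binom_pmf_ge0 k : 0 <= p <= 1 -> 0 <= binom_pmf K p k.
Proof.
case/andP=> p_ge0 p_le1; have q_ge0 : 0 <= 1 - p by rewrite subr_ge0.
by rewrite /binom_pmf !mulr_ge0 ?exprn_ge0.
Qed.

Lemma binom_reflect_gapE k : (2 * k < K)%N ->
  binom_reflect_gap K p k = 'C(K, k)%:R * (p * (1 - p)) ^+ k.+1 *
                            (p ^+ (K - (2 * k).+1) - (1 - p) ^+ (K - (2 * k).+1)).
Proof.
move=> ltkK; have [m ->] : exists m, K = (2 * k + m).+1 by exists (K - (2 * k).+1)%N; lia.
rewrite /binom_reflect_gap /binom_pmf bin_sub; last by lia.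
have -> : ((2 * k + m).+1 - (2 * k).+1 = m)%N by lia.
have -> : ((2 * k + m).+1 - k = k.+1 + m)%N by lia.
have -> : ((2 * k + m).+1 - (k.+1 + m) = k)%N by lia.
by rewrite !exprD !exprMn !exprS; ring.
Qed.

Lemma binom_reflect_gap_ge0 k : 1 / 2 <= p <= 1 -> (2 * k < K)%N ->
  0 <= binom_reflect_gap K p k.
Proof.
case/andP=> hp hp1 ltkK; rewrite binom_reflect_gapE //.
have p_ge0 : 0 <= p by lra.
have q_ge0 : 0 <= 1 - p by lra.
have le_qp : 1 - p <= p by lra.
rewrite !mulr_ge0 ?ler0n ?exprn_ge0 ?mulr_ge0 // subr_ge0.
by apply: lerXn2r.
Qed.

Lemma binom_reflect_gap_gt0 k : 1 / 2 < p < 1 -> ((2 * k).+1 < K)%N ->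
  0 < binom_reflect_gap K p k.
Proof.
case/andP=> hp hp1 ltkK; rewrite binom_reflect_gapE; last by lia.
have p_gt0 : 0 < p by lra.
have q_gt0 : 0 < 1 - p by lra.
have lt_qp : 1 - p < p by lra.
rewrite !mulr_gt0 ?ltr0n ?bin_gt0 ?exprn_gt0 ?mulr_gt0 // ?subr_gt0; first by lia.
by rewrite ltrXn2r ?ltW //; lia.
Qed.

End Binomial.

Section Shortfall.

Variables (R : realType) (K C : nat) (p : R) (w : nat -> R).

Let P := binom_pmf K p.

Lemma shortfall_decomposition (q : R) :
  \sum_(k < K.+1) P k * (q * (C%:R - w k) + (1 - q) * w (K - k)%N) =
  q * C%:R - (q - p) * \sum_(k < K.+1) (w k + w (K - k)%N) * P k
    + \sum_(k < K.+1) w k * binom_reflect_gap K p k.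
Proof.
have reflect_sum : \sum_(k < K.+1) w k * P (K - k)%N = \sum_(k < K.+1) w (K - k)%N * P k.
  rewrite -(sum_ord_reflect _ (fun k => w k * P (K - k)%N)).
  by apply: eq_bigr => k _; rewrite subKn // -ltnS.
have -> : \sum_(k < K.+1) P k * (q * (C%:R - w k) + (1 - q) * w (K - k)%N) =
    q * C%:R * \sum_(k < K.+1) P k - q * \sum_(k < K.+1) w k * P k
      + (1 - q) * \sum_(k < K.+1) w (K - k)%N * P k.
  by rewrite !mulr_sumr -sumrB -big_split; apply: eq_bigr => k _ /=; ring.
have -> : \sum_(k < K.+1) w k * binom_reflect_gap K p k =
    (1 - p) * \sum_(k < K.+1) w (K - k)%N * P k - p * \sum_(k < K.+1) w k * P k.
  rewrite -reflect_sum !mulr_sumr -sumrB.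
  by apply: eq_bigr => k _; rewrite /binom_reflect_gap /P; ring.
have -> : \sum_(k < K.+1) (w k + w (K - k)%N) * P k =
    \sum_(k < K.+1) w k * P k + \sum_(k < K.+1) w (K - k)%N * P k.
  by rewrite -big_split; apply: eq_bigr => k _; rewrite mulrDl.
by rewrite /P binom_pmf_sum; ring.
Qed.

Hypothesis w_vanish : forall k, (k <= K)%N -> (K <= 2 * k)%N -> w k = 0.

Lemma shortfall_reflect_sum_le :
  0 <= p <= 1 -> (forall k, (k <= K)%N -> w k <= C%:R) ->
  \sum_(k < K.+1) (w k + w (K - k)%N) * P k <= C%:R.
Proof.
move=> p01 w_le.
apply: (le_trans (y := \sum_(k < K.+1) C%:R * P k)); last first.
  by rewrite -mulr_sumr /P binom_pmf_sum mulr1.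
apply: ler_sum => k _; have le_kK : (k <= K)%N by rewrite -ltnS.
apply: ler_wpM2r; first exact: binom_pmf_ge0.
case: (leqP K (2 * k)) => [le_Kk | lt_kK].
  by rewrite w_vanish // add0r w_le // leq_subr.
by rewrite (w_vanish (leq_subr k K)) ?addr0 ?w_le //; lia.
Qed.

Lemma shortfall_reflect_gap_gt0 :
  1 / 2 < p < 1 -> (2 <= K)%N -> (forall k, (k <= K)%N -> 0 <= w k) -> 0 < w 0 ->
  0 < \sum_(k < K.+1) w k * binom_reflect_gap K p k.
Proof.
move=> /andP[hp hp1] le2K w_ge0 w0_gt0; rewrite big_ord_recl /=.
apply: ltr_pwDl.
  by rewrite mulr_gt0 // binom_reflect_gap_gt0 ?hp ?hp1.
apply: sumr_ge0 => i _; rewrite /bump leq0n add1n.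
have le_iK : (i.+1 <= K)%N by apply: ltn_ord.
case: (leqP K (2 * i.+1)) => [le_Ki | lt_iK]; first by rewrite w_vanish // mul0r.
apply: mulr_ge0; first exact: w_ge0.
by apply: binom_reflect_gap_ge0; rewrite ?ltW.
Qed.

End Shortfall.

Section Strategy.

Variables (R : realType) (K C : nat) (sigma : strategy R).
Hypothesis sigmaP : is_strategy K C sigma.

Lemma mean_share_ge0 s k : (k <= K)%N -> 0 <= mean_share C sigma s k.
Proof.
move=> le_kK; have [ge0 _ _] := sigmaP s le_kK.
by apply: sumr_ge0 => z _; apply: mulr_ge0; [exact: ler0n | exact: ge0 _ (ltn_ord z)].
Qed.

Lemma mean_share_le s k : (k <= K)%N -> mean_share C sigma s k <= C%:R.
Proof.
move=> le_kK; have [ge0 sum1 _] := sigmaP s le_kK.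
apply: (le_trans (y := \sum_(z < C.+1) C%:R * sigma s k z)); last first.
  by rewrite -mulr_sumr sum1 mulr1.
apply: ler_sum => z _; apply: ler_wpM2r; first exact: ge0 _ (ltn_ord z).
by rewrite ler_nat -ltnS.
Qed.

Lemma mean_share0 s : mean_share C sigma s 0 = 0.
Proof.
have [_ _ support] := sigmaP s (leq0n K).
apply: big1 => -[[|z] ltzC] _ /=; first by rewrite mul0r.
by rewrite support ?mulr0 //= minnC minn0 andbF.
Qed.

Lemma mean_share_full s k : (k <= K)%N -> sigma s k C = 1 ->
  mean_share C sigma s k = C%:R.
Proof.
move=> le_kK sC1; have [ge0 sum1 _] := sigmaP s le_kK.
move: sum1; rewrite /mean_share !big_ord_recr /= sC1 mulr1 => sum1.
have /psumr_eq0P below0 : \sum_(z < C) sigma s k z = 0 by lra.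
rewrite big1 ?add0r // => z _.
by rewrite below0 ?mulr0 // => i _; rewrite ge0 // ltnW.
Qed.

Hypothesis sigma_sym : state_symmetric K C sigma.

Lemma mean_share_sym s k : (k <= K)%N ->
  mean_share C sigma s k = C%:R - mean_share C sigma (~~ s) (K - k).
Proof.
move=> le_kK; have [_ sum1 _] := sigmaP (~~ s) (leq_subr k K).
rewrite /mean_share.
under eq_bigr => z _ do rewrite (sigma_sym s le_kK (ltn_ord z)).
rewrite -(sum_ord_reflect _ (fun z => z%:R * sigma (~~ s) (K - k)%N (C - z)%N)).
have -> : C%:R = \sum_(z < C.+1) C%:R * sigma (~~ s) (K - k)%N z.
  by rewrite -mulr_sumr sum1 mulr1.
rewrite -sumrB; apply: eq_bigr => z _; have le_zC : (z <= C)%N := ltn_ord z.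
by rewrite subKn // natrB // mulrBl.
Qed.

End Strategy.

Lemma inflow_accuracy_gt (R : realType) (q lambda : R) (K C : nat)
    (sigma : strategy R) (x : R) :
  q < 1 -> (1 <= C)%N -> (2 * C <= K)%N -> 0 <= lambda <= 1 ->
  is_strategy K C sigma -> state_symmetric K C sigma ->
  (forall k, (k <= K)%N -> (K <= 2 * k)%N -> sigma true k C = 1) ->
  1 / 2 < lambda * x + (1 - lambda) * q -> x <= q ->
  x < inflow_accuracy K C q lambda sigma x.
Proof.
move=> q_lt1 C_ge1 le_2CK /andP[l_ge0 l_le1] sigmaP sigma_sym full_above hp le_xq.
set p := lambda * x + (1 - lambda) * q in hp *.
have le_xp : x <= p.
  by rewrite -subr_ge0 (_ : p - x = (1 - lambda) * (q - x)) ?mulr_ge0 ?subr_ge0 // /p; ring.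
have le_pq : p <= q.
  by rewrite -subr_ge0 (_ : q - p = lambda * (q - x)) ?mulr_ge0 ?subr_ge0 // /p; ring.
have p01 : 0 <= p <= 1 by apply/andP; split; lra.
set w := fun k => C%:R - mean_share C sigma true k.
have w_vanish k : (k <= K)%N -> (K <= 2 * k)%N -> w k = 0.
  by move=> le_kK le_Kk; rewrite /w (mean_share_full sigmaP) ?full_above ?subrr.
have w_le k : (k <= K)%N -> w k <= C%:R.
  by move=> le_kK; rewrite /w lerBlDr lerDl (mean_share_ge0 sigmaP).
have w_ge0 k : (k <= K)%N -> 0 <= w k.
  by move=> le_kK; rewrite /w subr_ge0 (mean_share_le sigmaP).
have w0_gt0 : 0 < w 0%N by rewrite /w (mean_share0 sigmaP) subr0 ltr0n.
have p_half1 : 1 / 2 < p < 1 by apply/andP; split; lra.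
have le_2K : (2 <= K)%N by lia.
have sum_le := shortfall_reflect_sum_le w_vanish p01 w_le.
have gap_gt0 := shortfall_reflect_gap_gt0 w_vanish p_half1 le_2K w_ge0 w0_gt0.
rewrite /inflow_accuracy.
under eq_bigr => k _.
  rewrite (mean_share_sym sigmaP sigma_sym false (ltn_ord k)) /= -/(w (K - k)%N).
  rewrite -[mean_share C sigma true k](subKr C%:R) -/(w k).
  over.
rewrite shortfall_decomposition ltr_pdivlMr; last by rewrite ltr_wpDr // ltr01.
move: sum_le gap_gt0.
set S := \sum_(k < K.+1) _ * _; set G := \sum_(k < K.+1) _ * _ => le_SC G_gt0.
have C_ge0 : 0 <= C%:R :> R := ler0n _ C.
have : (q - p) * S <= (q - p) * C%:R by rewrite ler_wpM2l // subr_ge0.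
have : x * C%:R <= p * C%:R by rewrite ler_wpM2r.
rewrite -/p; lra.
Qed.

Theorem lemma4 (R : realType) (q lambda : R) (K C : nat) (sigma : strategy R) :
  1 / 2 < q -> q < 1 ->
  (1 <= K)%N -> (1 <= C)%N -> (2 * C <= K)%N ->
  0 <= lambda -> lambda <= 1 ->
  is_strategy K C sigma ->
  state_symmetric K C sigma ->
  (forall k : nat, (k <= K)%N -> (K <= 2 * k)%N -> sigma true k C = 1) ->
  ~ (exists x : R,
       [/\ 0 <= x, x <= 1,
           inflow_accuracy K C q lambda sigma x = x,
           1 / 2 < lambda * x + (1 - lambda) * q
         & x <= q]).
Proof.
move=> _ q_lt1 _ C_ge1 le_2CK l_ge0 l_le1 sigmaP sigma_sym full_above.
case=> x [_ _ fixed hp le_xq].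
have l01 : 0 <= lambda <= 1 by rewrite l_ge0 l_le1.
have := inflow_accuracy_gt q_lt1 C_ge1 le_2CK l01 sigmaP sigma_sym full_above hp le_xq.
by rewrite fixed ltxx.
Qed.
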